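(* Let $\lambda$ be a partition and $c=(x,y)\in\overline{\lambda}$ with $x>\lambda_1$ and $y>\lambda'_1$. Then for every $\nu\in\mathcal{U}(\lambda)$, \[ P^{q,t}_\lambda(\nu\mid c)=t^{n(\nu/\lambda)}\alpha_{\nu/\lambda}(q,t). \] In particular $P^{q,t}_\lambda(\nu\mid c)$ does not depend on the choice of such $c$.
   Context: Partitions are Young diagrams in French convention: cells $(x,y)\in\mathbb{Z}_{>0}^2$ with $x\le\lambda_y$; $\lambda'$ is the conjugate ($\lambda_j=0$ for $j>\lambda'_1$, $\lambda'_i=0$ for $i>\lambda_1$). For $c=(x,y)\in\lambda$: $a_\lambda(c)=\lambda_y-x$, $\ell_\lambda(c)=\lambda'_x-y$; $n(\kappa)=\sum_{c\in\kappa}\ell_\kappa(c)$, $n(\nu/\lambda)=n(\nu)-n(\lambda)$. $\mathcal{U}(\lambda)$ is the set of partitions obtained by adding one cell to $\lambda$. For $\lambda\subseteq\nu$, $\mathcal{R}_{\nu/\lambda}$ (resp. $\mathcal{C}_{\nu/\lambda}$) is the set of cells of $\lambda$ in a row (resp. column) containing a cell of $\nu/\lambda$. With $[i,j]=1-q^it^j$: $\alpha_{\nu/\lambda}(q,t)=\prod_{c\in\mathcal{R}_{\nu/\lambda}}\frac{[a_\lambda(c),\ell_\lambda(c)+1]}{[a_\nu(c),\ell_\nu(c)+1]}\prod_{c\in\mathcal{C}_{\nu/\lambda}}\frac{[a_\lambda(c)+1,\ell_\lambda(c)]}{[a_\nu(c)+1,\ell_\nu(c)]}$. Exterior hook walk: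 $\overline{\lambda}=\mathbb{Z}_{>0}^2\setminus\lambda$. For $c=(x,y)\in\overline{\lambda}$: ${\rm arm}_\lambda(c)=\{(i,y):\lambda_y<i<x\}$, ${\rm leg}_\lambda(c)=\{(x,j):\lambda'_x<j<y\}$, $a(c)=|{\rm arm}_\lambda(c)|$, $\ell(c)=|{\rm leg}_\lambda(c)|$; $c$ is an outer corner of $\lambda$ iff $a(c)=\ell(c)=0$. For $c'\in{\rm arm}_\lambda(c)\cup{\rm leg}_\lambda(c)$ set $P(c\rightarrow c')=q^{a(c)-i}\frac{t^{\ell(c)}(1-q)}{1-q^{a(c)}t^{\ell(c)}}$ if $c'=(x-i,y)\in{\rm arm}_\lambda(c)$, and $P(c\rightarrow c')=t^{j-1}\frac{1-t}{1-q^{a(c)}t^{\ell(c)}}$ if $c'=(x,y-j)\in{\rm leg}_\lambda(c)$. The exterior $(q,t)$-hook walk from $c$ terminates if $c$ is an outer corner, and otherwise moves to $c'$ with probability $P(c\rightarrow c')$ and repeats. $P^{q,t}_\lambda(\nu\mid c)$ is the probability (a rational function of $q,t$: sum over walks of products of step probabilities) that the walk from $c$ terminates at the cell $\nu/\lambda$. *)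

From mathcomp Require Import all_boot all_order all_algebra.
Set Implicit Arguments. Unset Strict Implicit. Unset Printing Implicit Defensive.
Import Order.TTheory GRing.Theory Num.Theory.
Local Open Scope ring_scope.

(* Partitions are nonincreasing lists of positive parts: la = [:: la_1; la_2; ...].
   Cells are pairs (x, y) of positive integers (French convention: x = column,
   y = row). *)
Definition is_partition (la : seq nat) : bool :=
  sorted (fun a b => (b <= a)%N) la && all (fun r => (0 < r)%N) la.

Definition prow (la : seq nat) (y : nat) : nat := nth 0%N la y.-1.
Definition pcol (la : seq nat) (x : nat) : nat := count (fun r => (x <= r)%N) la.

Definition incell (la : seq nat) (c : nat * nat) : bool :=
  [&& (0 < c.1)%N, (0 < c.2)%N & (c.1 <= prow la c.2)%N].

Definition cells (la : seq nat) : seq (nat * nat) :=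
  [seq (x, y) | y <- iota 1 (size la), x <- iota 1 (prow la y)].

Definition parm (ka : seq nat) (c : nat * nat) : nat := (prow ka c.2 - c.1)%N.
Definition pleg (ka : seq nat) (c : nat * nat) : nat := (pcol ka c.1 - c.2)%N.

Definition nstat (ka : seq nat) : nat := (\sum_(c <- cells ka) pleg ka c)%N.

Definition adds_cell (la nu : seq nat) (d : nat * nat) : Prop :=
  [/\ (0 < d.1)%N, (0 < d.2)%N, ~~ incell la d &
      forall c : nat * nat, (0 < c.1)%N -> (0 < c.2)%N ->
        incell nu c = incell la c || (c == d)].

Definition skew_cells (la nu : seq nat) : seq (nat * nat) :=
  [seq e <- cells nu | ~~ incell la e].
Definition Rcells (la nu : seq nat) : seq (nat * nat) :=
  [seq c <- cells la | has (fun e => e.2 == c.2) (skew_cells la nu)].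
Definition Ccells (la nu : seq nat) : seq (nat * nat) :=
  [seq c <- cells la | has (fun e => e.1 == c.1) (skew_cells la nu)].

Section QT.
Variables (K : fieldType) (q t : K).

Definition br (i j : nat) : K := 1 - q ^+ i * t ^+ j.

Definition alpha (la nu : seq nat) : K :=
  (\prod_(c <- Rcells la nu)
      (br (parm la c) (pleg la c).+1 / br (parm nu c) (pleg nu c).+1)) *
  (\prod_(c <- Ccells la nu)
      (br (parm la c).+1 (pleg la c) / br (parm nu c).+1 (pleg nu c))).

(* For c = (x,y) outside la:
   a(c) = x - la_y - 1, l(c) = y - la'_x - 1.
   walkP n la d x y = probability that the walk started at (x,y) terminates
   at the cell d, computed by first-step decomposition (= sum over walks of
   products of step probabilities); n is fuel, sufficient when n >= x + y
   since every step strictly decreases x + y. *)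
Fixpoint walkP (n : nat) (la : seq nat) (d : nat * nat) (x y : nat) : K :=
  match n with
  | 0%N => 0
  | n'.+1 =>
    let a := (x - prow la y - 1)%N in
    let l := (y - pcol la x - 1)%N in
    if (a == 0%N) && (l == 0%N) then (if (x, y) == d then 1 else 0)
    else
      \sum_(1 <= i < a.+1)
         (q ^+ (a - i) * t ^+ l * (1 - q) / (1 - q ^+ a * t ^+ l))
           * walkP n' la d (x - i)%N y
    + \sum_(1 <= j < l.+1)
         (t ^+ (j - 1) * (1 - t) / (1 - q ^+ a * t ^+ l))
           * walkP n' la d x (y - j)%N
  end.

(* P^{q,t}_la(nu | c), where d is the cell nu/la *)
Definition hookP (la : seq nat) (d c : nat * nat) : K :=
  walkP (c.1 + c.2) la d c.1 c.2.

End QT.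

(* Let d = (al, be) be the added cell.  Both coordinates decrease along a walk, so a
   walk that passes left of column al or below row be never ends at d.  For x >= al and
   y >= be the probability of ending at d factors as U(x) V(y): V(y) is the product of
   the alpha-factors of the cells (i, be) with la_y < i < al, and U(x) is t^l times the
   product of the alpha-factors of the cells (al, j) with la'_x < j < be, where l is the
   exterior leg of (x, be).  The induction on x + y through the first-step decomposition
   closes because the arm sum of the U(x - i) and the leg sum of the V(y - j) have closed
   forms: across a column x of la the factor U changes by the telescoping product of
   the ratios [x + 1 - al, k] / [x + 1 - al, k + 1], and V likewise across a row.
   Outside the first row and column of la both products are complete, giving
   t^(be - 1) alpha, and n(nu/la) = be - 1. *)

From mathcomp Require Import all_boot all_order all_algebra.
From mathcomp Require Import zify ring.
Set Implicit Arguments. Unset Strict Implicit. Unset Printing Implicit Defensive.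
Import Order.TTheory GRing.Theory Num.Theory.

Section Partition.
Variable la : seq nat.

Lemma prow_default y : size la < y -> prow la y = 0.
Proof. by case: y => // y; rewrite ltnS => h; rewrite /prow nth_default. Qed.

Lemma pcol_antimono x x' : x <= x' -> pcol la x' <= pcol la x.
Proof. by move=> h; apply: sub_count => b /=; apply: leq_trans. Qed.

Lemma incellE x y : 0 < x -> 0 < y -> incell la (x, y) = (x <= prow la y).
Proof. by move=> x0 y0; rewrite /incell /= x0 y0. Qed.

Lemma mem_cells c : (c \in cells la) = incell la c.
Proof.
rewrite /cells /incell; apply/allpairsPdep/idP.
  move=> [y [x [hy hx ->]]] /=; move: hy hx; rewrite !mem_iota.
  by case/andP=> -> _ /andP[-> ]; rewrite add1n ltnS.
case: c => x y /= /and3P[x0 y0 hx]; exists y, x; rewrite !mem_iota !add1n !ltnS x0 y0 hx.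
split=> //=; case: (leqP y (size la)) => // hy.
by rewrite prow_default // in hx; case: (x) x0 hx.
Qed.

Lemma uniq_cells : uniq (cells la).
Proof.
apply: allpairs_uniq_dep => [|y _|[y1 x1] [y2 x2] _ _ /= [-> ->]] //; exact: iota_uniq.
Qed.

Hypothesis hla : is_partition la.

Lemma leq_pcol_prow x y : 0 < x -> 0 < y ->
  (y <= pcol la x) = (x <= prow la y).
Proof.
case/andP: hla => hs _ x0; elim: la hs y => [|r s IH] hs y y0.
  by rewrite /pcol /prow /= nth_nil leqNgt y0 leqNgt x0.
have hs' : sorted (fun a b => (b <= a)) s by apply: path_sorted hs.
have le_r : all (fun b => b <= r) s.
  by apply: (order_path_min _ hs) => a b c h1 h2; apply: leq_trans h2 h1.
have count0 : r < x -> count (fun b => x <= b) s = 0.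
  move=> hr; apply/eqP; rewrite -leqn0 leqNgt -has_count; apply/hasP => -[b /(allP le_r) hb].
  by rewrite leqNgt (leq_ltn_trans hb hr).
rewrite /pcol /prow /=; case: y y0 => [|[|y']] //= _.
  by case: (leqP x r) => hr //; rewrite count0.
have := IH hs' y'.+1 isT; rewrite /pcol /prow /= => <-.
by case: (leqP x r) => hr; [rewrite add1n ltnS | rewrite count0].
Qed.

Lemma prow_antimono y y' : 0 < y -> y <= y' -> prow la y' <= prow la y.
Proof.
move=> y0 yy; case E: (prow la y') => [|x] //.
have h : x.+1 <= prow la y' by rewrite E.
rewrite -leq_pcol_prow // in h; last exact: leq_trans yy.
by rewrite -leq_pcol_prow //; apply: leq_trans h.
Qed.

Lemma cells_row y : 0 < y ->
  perm_eq [seq c <- cells la | c.2 == y] [seq (i, y) | i <- iota 1 (prow la y)].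
Proof.
move=> y0; have pair_inj : injective (fun i : nat => (i, y)) by move=> ? ? [].
apply: uniq_perm; first exact/filter_uniq/uniq_cells.
  by rewrite (map_inj_uniq pair_inj) iota_uniq.
case=> i j; rewrite mem_filter mem_cells /=; case: (j =P y) => [->|ne].
  by rewrite (mem_map pair_inj) mem_iota /incell /= y0 add1n ltnS.
by apply/esym/mapP => -[k _ [_ e]]; apply: ne.
Qed.

Lemma cells_col x : 0 < x ->
  perm_eq [seq c <- cells la | c.1 == x] [seq (x, j) | j <- iota 1 (pcol la x)].
Proof.
move=> x0; have pair_inj : injective (fun j : nat => (x, j)) by move=> ? ? [].
apply: uniq_perm; first exact/filter_uniq/uniq_cells.
  by rewrite (map_inj_uniq pair_inj) iota_uniq.
case=> i j; rewrite mem_filter mem_cells /=; case: (i =P x) => [->|ne].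
  rewrite (mem_map pair_inj) mem_iota add1n ltnS /incell /= x0.
  by case: (posnP j) => [->|j0] //=; rewrite leq_pcol_prow.
by apply/esym/mapP => -[k _ [e _]]; apply: ne.
Qed.

End Partition.

Lemma eqn_leq_pos a b : (forall x, 0 < x -> (x <= a) = (x <= b)) -> a = b.
Proof.
move=> h; apply/eqP; rewrite eqn_leq; apply/andP; split.
  by case: a h => // a h; rewrite -h.
by case: b h => // b h; rewrite h.
Qed.

Section AddCell.
Variables (la nu : seq nat) (al be : nat).
Hypotheses (hla : is_partition la) (hnu : is_partition nu)
  (hd : adds_cell la nu (al, be)).

Lemma al_gt0 : 0 < al. Proof. by case: hd. Qed.
Lemma be_gt0 : 0 < be. Proof. by case: hd. Qed.

Let incell_nu x y : 0 < x -> 0 < y ->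
  incell nu (x, y) = incell la (x, y) || ((x, y) == (al, be)).
Proof. by case: hd => _ _ _ h x0 y0; apply: (h (x, y)). Qed.

Let prow_add_leq x y : 0 < x -> 0 < y ->
  (x <= prow nu y) = (x <= prow la y) || ((x == al) && (y == be)).
Proof. by move=> x0 y0; rewrite -!incellE // incell_nu. Qed.

Lemma prow_be : prow la be = al.-1.
Proof.
have a0 := al_gt0; have b0 := be_gt0.
have : ~~ incell la (al, be) by case: hd.
rewrite incellE // -ltnNge => lt_al.
have al_nu : (al <= prow nu be) by rewrite prow_add_leq // !eqxx orbT.
apply: eqn_leq_pos => x x0; apply/idP/idP => h; first by lia.
have := leq_trans (leq_trans h (leq_pred al)) al_nu.
by rewrite prow_add_leq // eqxx andbT => /orP[//|/eqP ex]; lia.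
Qed.

Lemma prow_add y : 0 < y -> prow nu y = if y == be then al else prow la y.
Proof.
move=> y0; have a0 := al_gt0; apply: eqn_leq_pos => x x0; rewrite prow_add_leq //.
case: (y =P be) => [->|_]; last by rewrite andbF orbF.
by rewrite prow_be andbT; apply/idP/idP => [/orP[]|]; [lia|move/eqP->|lia].
Qed.

Lemma pcol_al : pcol la al = be.-1.
Proof.
have a0 := al_gt0; have b0 := be_gt0.
apply: eqn_leq_pos => y y0; rewrite leq_pcol_prow // -[(y <= be.-1)]ltnS prednK //.
case: (ltnP y be) => hy.
  have := prow_antimono hnu y0 (ltnW hy).
  by rewrite (prow_add y0) (prow_add b0) eqxx (ltn_eqF hy).
have := prow_antimono hla b0 hy; rewrite prow_be => h.
by apply/negbTE; rewrite -ltnNge; apply: leq_ltn_trans h _; rewrite ltn_predL.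
Qed.

Lemma pcol_add x : 0 < x -> pcol nu x = if x == al then be else pcol la x.
Proof.
move=> x0; have a0 := al_gt0; have b0 := be_gt0.
apply: eqn_leq_pos => y y0; rewrite leq_pcol_prow // prow_add //.
case: (x =P al) => [->|/eqP nx]; case: (y =P be) => [->|/eqP ny].
- by rewrite !leqnn.
- by rewrite -[LHS]leq_pcol_prow // pcol_al; apply/idP/idP; lia.
- by rewrite leq_pcol_prow // prow_be; apply/idP/idP; lia.
- by rewrite leq_pcol_prow.
Qed.

Lemma leq_al_of_prow1 x : prow la 1 < x -> al <= x.
Proof.
have := prow_antimono hla (isT : 0 < 1) be_gt0; rewrite prow_be => h hx.
by rewrite -[al]prednK ?al_gt0 //; apply: leq_ltn_trans h hx.
Qed.

Lemma leq_be_of_pcol1 y : pcol la 1 < y -> be <= y.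
Proof.
have := pcol_antimono la al_gt0; rewrite pcol_al => h hy.
by rewrite -[be]prednK ?be_gt0 //; apply: leq_ltn_trans h hy.
Qed.

Lemma cells_add : perm_eq (cells nu) ((al, be) :: cells la).
Proof.
apply: uniq_perm; first exact: uniq_cells.
  by rewrite /= uniq_cells mem_cells andbT; case: hd.
case=> x y; rewrite inE !mem_cells.
case: (posnP x) => [->|x0].
  by rewrite /incell /= orbF; apply/esym/negbTE; apply: contraTneq al_gt0 => -[<-].
case: (posnP y) => [->|y0].
  by rewrite /incell /= !andbF orbF; apply/esym/negbTE; apply: contraTneq be_gt0 => -[_ <-].
by rewrite incell_nu // orbC.
Qed.

Let mem_skew_cells c : (c \in skew_cells la nu) = (c == (al, be)).
Proof.
rewrite mem_filter -mem_cells (perm_mem cells_add) inE.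
by case: eqP => [->|_]; rewrite ?andNb // mem_cells; case: hd => _ _ ->.
Qed.

Let has_skew_cells (P : pred (nat * nat)) : has P (skew_cells la nu) = P (al, be).
Proof.
by rewrite (eq_has_r (s2 := [:: (al, be)])) /= ?orbF // => c; rewrite mem_skew_cells inE.
Qed.

Lemma Rcells_add : perm_eq (Rcells la nu) [seq (i, be) | i <- iota 1 al.-1].
Proof.
have -> : Rcells la nu = [seq c <- cells la | c.2 == be].
  by apply: eq_filter => c; rewrite has_skew_cells eq_sym.
by rewrite -prow_be; apply: cells_row be_gt0.
Qed.

Let cells_col_al :
  perm_eq [seq c <- cells la | c.1 == al] [seq (al, j) | j <- iota 1 be.-1].
Proof. by rewrite -pcol_al; apply: cells_col al_gt0. Qed.

Lemma Ccells_add : perm_eq (Ccells la nu) [seq (al, j) | j <- iota 1 be.-1].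
Proof.
have -> : Ccells la nu = [seq c <- cells la | c.1 == al].
  by apply: eq_filter => c; rewrite has_skew_cells eq_sym.
exact: cells_col_al.
Qed.

Lemma nstat_add : nstat nu - nstat la = be.-1.
Proof.
have a0 := al_gt0.
have pleg_nu c : c \in cells la -> pleg nu c = pleg la c + (c.1 == al).
  case: c => x y; rewrite mem_cells => /and3P[/= x0 y0 hx].
  rewrite /pleg /= pcol_add //; case: (x =P al) => [ex|_]; last by rewrite addn0.
  rewrite ex pcol_al; rewrite -leq_pcol_prow // ex pcol_al in hx; have := be_gt0; lia.
have col_al : \sum_(c <- cells la) (c.1 == al) = be.-1.
  transitivity (count (fun c => c.1 == al) (cells la)).
    by rewrite -sum1_count [RHS]big_mkcond.
  by rewrite -size_filter (perm_size cells_col_al) size_map size_iota.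
rewrite /nstat (perm_big _ cells_add) big_cons (eq_big_seq _ pleg_nu) big_split /=.
by rewrite col_al /pleg /= pcol_add // eqxx subnn add0n addKn.
Qed.

End AddCell.

Local Open Scope ring_scope.

Section Telescope.
Variable K : fieldType.

Lemma prodf_telescope (g : nat -> K) m n : (m <= n)%N -> (forall k, g k != 0) ->
  \prod_(m <= k < n) (g k.+1 / g k) = g n / g m.
Proof.
move=> + nz; rewrite leq_eqVlt => /predU1P[<-|lt_mn]; first by rewrite big_geq ?divff.
rewrite (telescope_prodr_eq (fun k => (g k)^-1)) // => [|k _|k _].
- by rewrite invrK mulrC.
- by rewrite unitfE invr_eq0.
- by rewrite invrK mulrC.
Qed.

Lemma prodf_telescope_cat (F g : nat -> K) m n p : (m <= n <= p)%N ->
  (forall k, g k != 0) -> (forall k, (m <= k < n)%N -> F k = g k.+1 / g k) ->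
  \prod_(m <= k < p) F k * g m = \prod_(n <= k < p) F k * g n.
Proof.
case/andP=> hmn hnp nz hF; rewrite (big_cat_nat hmn hnp) /= (eq_big_nat _ _ hF).
by rewrite prodf_telescope // mulrAC divfK // mulrC.
Qed.

End Telescope.

Section HookWalk.
Variables (K : fieldType) (q t : K).

Lemma walkP_eq0 n la d x y : ((x < d.1) || (y < d.2))%N -> walkP q t n la d x y = 0.
Proof.
case: d => d1 d2; elim: n x y => [|n IH] x y /= h //; case: ifP => _.
  by case: eqP => // -[ex ey]; move: h; rewrite ex ey !ltnn.
rewrite !big1 ?addr0 // => i _; rewrite IH ?mulr0 //.
all: by case/orP: h => h; apply/orP; [left|right]; apply: (leq_ltn_trans _ h); rewrite ?leq_subr.
Qed.

Hypothesis generic : forall i j : nat, (0 < i + j)%N -> 1 - q ^+ i * t ^+ j != 0.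

Variables (la nu : seq nat) (al be : nat).
Hypotheses (hla : is_partition la) (hnu : is_partition nu)
  (hd : adds_cell la nu (al, be)).

Definition alpha_col j :=
  br q t (prow la j - al).+1 (be.-1 - j) / br q t (prow la j - al).+1 (be - j).
Definition alpha_row i :=
  br q t (al.-1 - i) (pcol la i - be).+1 / br q t (al - i) (pcol la i - be).+1.

Lemma alphaE :
  alpha q t la nu = (\prod_(1 <= i < al) alpha_row i) * \prod_(1 <= j < be) alpha_col j.
Proof.
have a0 := al_gt0 hd; have b0 := be_gt0 hd.
rewrite /alpha (perm_big _ (Rcells_add hla hnu hd)) (perm_big _ (Ccells_add hla hnu hd)).
rewrite !big_map /index_iota !subn1; congr (_ * _); apply: eq_big_seq => k.
  rewrite mem_iota add1n prednK // => /andP[k0 hk].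
  rewrite /alpha_row /parm /pleg /= (prow_be hla hnu hd) (prow_add hla hnu hd) // eqxx.
  by rewrite (pcol_add hla hnu hd) // ltn_eqF.
rewrite mem_iota add1n prednK // => /andP[k0 hk].
rewrite /alpha_col /parm /pleg /= (pcol_al hla hnu hd) (pcol_add hla hnu hd) // eqxx.
by rewrite (prow_add hla hnu hd) // ltn_eqF.
Qed.

(* For x >= al and y >= be, the exterior arm of (x, y) is (x - al) + arm_al y
   and its exterior leg is (y - be) + leg_be x. *)
Definition arm_al y := (al.-1 - prow la y)%N.
Definition leg_be x := (be.-1 - pcol la x)%N.
Definition colprod x := \prod_((pcol la x).+1 <= j < be) alpha_col j.
Definition rowprod y := \prod_((prow la y).+1 <= i < al) alpha_row i.
Definition walkU x := t ^+ leg_be x * colprod x.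

Lemma colprod_step x : (al <= x)%N ->
  colprod x.+1 * br q t (x.+1 - al) (leg_be x.+1) = colprod x * br q t (x.+1 - al) (leg_be x).
Proof.
move=> hx; have b0 := be_gt0 hd; have x0 : (0 < x)%N by apply: leq_trans (al_gt0 hd) hx.
have pcol_x : (pcol la x < be)%N.
  by rewrite -[be]prednK // ltnS -(pcol_al hla hnu hd) pcol_antimono.
rewrite /leg_be -!predn_sub -!subnS.
apply: (prodf_telescope_cat (g := fun j => br q t (x.+1 - al) (be - j))).
- by rewrite ltnS pcol_antimono //=.
- by move=> k; apply: generic; rewrite subSn.
move=> j /andP[lo hi]; have j0 : (0 < j)%N by apply: leq_trans lo.
rewrite /alpha_col; have -> : prow la j = x.
  apply/eqP; rewrite eqn_leq -ltnS ltnNge -leq_pcol_prow // -ltnNge lo /=.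
  by rewrite -leq_pcol_prow // -ltnS.
by rewrite subSn // -predn_sub -subnS.
Qed.

Lemma rowprod_step y : (be <= y)%N ->
  rowprod y.+1 * br q t (arm_al y.+1) (y.+1 - be) = rowprod y * br q t (arm_al y) (y.+1 - be).
Proof.
move=> hy; have a0 := al_gt0 hd; have y0 : (0 < y)%N by apply: leq_trans (be_gt0 hd) hy.
have prow_y : (prow la y < al)%N.
  rewrite -[al]prednK // ltnS -(prow_be hla hnu hd).
  exact: prow_antimono (be_gt0 hd) hy.
rewrite /arm_al -!predn_sub -!subnS.
apply: (prodf_telescope_cat (g := fun i => br q t (al - i) (y.+1 - be))).
- by rewrite ltnS prow_antimono //=.
- by move=> k; apply: generic; rewrite subSn // addnS.
move=> i /andP[lo hi]; have i0 : (0 < i)%N by apply: leq_trans lo.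
rewrite /alpha_row; have -> : pcol la i = y.
  apply/eqP; rewrite eqn_leq -ltnS ltnNge leq_pcol_prow // -ltnNge lo /=.
  by rewrite leq_pcol_prow // -ltnS.
by rewrite subSn // -predn_sub -subnS.
Qed.

Lemma arm_sum X : \sum_(1 <= i < X.+1) q ^+ (X - i) * (1 - q) * walkU (al + X - i)
  = br q t X (leg_be (al + X)) * colprod (al + X).
Proof.
elim: X => [|X IH].
  by rewrite big_geq // addn0 /leg_be (pcol_al hla hnu hd) subnn /br !expr0 mulr1 subrr mul0r.
rewrite big_nat_recl //; under eq_bigr do rewrite addnS !subSS.
have := colprod_step (leq_addr X al); rewrite -addnS addKn => step.
rewrite [RHS]mulrC step IH addnS !subn1 /= /walkU /br exprS; ring.
Qed.

Lemma leg_sum Y : \sum_(1 <= j < Y.+1) t ^+ (j - 1) * (1 - t) * rowprod (be + Y - j)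
  = br q t (arm_al (be + Y)) Y * rowprod (be + Y).
Proof.
elim: Y => [|Y IH].
  by rewrite big_geq // addn0 /arm_al (prow_be hla hnu hd) subnn /br !expr0 mulr1 subrr mul0r.
rewrite big_nat_recl // (eq_big_nat _ _
  (F2 := fun j => t * (t ^+ (j - 1) * (1 - t) * rowprod (be + Y - j)))); last first.
  by case=> // j _; rewrite addnS subSS !subn1 /= exprS !mulrA.
have := rowprod_step (leq_addr Y be); rewrite -addnS addKn => step.
rewrite [RHS]mulrC step -big_distrr /= IH addnS !subn1 /= /br exprS; ring.
Qed.

Lemma walkU_al : walkU al = 1.
Proof.
rewrite /walkU /leg_be /colprod (pcol_al hla hnu hd) subnn prednK ?(be_gt0 hd) //.
by rewrite big_geq // mulr1.
Qed.

Lemma rowprod_be : rowprod be = 1.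
Proof. by rewrite /rowprod (prow_be hla hnu hd) prednK ?(al_gt0 hd) // big_geq. Qed.

Lemma walkU_far x : (prow la 1 < x)%N ->
  walkU x = t ^+ be.-1 * \prod_(1 <= j < be) alpha_col j.
Proof.
move=> hx; have x0 : (0 < x)%N by apply: leq_ltn_trans hx.
have pcol0 : pcol la x = 0%N by apply/eqP; rewrite -leqn0 leqNgt leq_pcol_prow // -ltnNge.
by rewrite /walkU /leg_be /colprod pcol0 subn0.
Qed.

Lemma rowprod_far y : (pcol la 1 < y)%N -> rowprod y = \prod_(1 <= i < al) alpha_row i.
Proof.
move=> hy; have y0 : (0 < y)%N by apply: leq_ltn_trans hy.
have prow0 : prow la y = 0%N by apply/eqP; rewrite -leqn0 leqNgt -leq_pcol_prow // -ltnNge.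
by rewrite /rowprod prow0.
Qed.

(* [s] and [D] stand for the factor t^l and the denominator 1 - q^a t^l of the
   arm-step probabilities. *)
Lemma arm_walk n X y (s D : K) :
  (forall i, (0 < i <= X)%N ->
     walkP q t n la (al, be) (al + X - i) y = walkU (al + X - i) * rowprod y) ->
  \sum_(1 <= i < (X + arm_al y).+1)
     (q ^+ (X + arm_al y - i) * s * (1 - q) / D) * walkP q t n la (al, be) (al + X - i) y
  = q ^+ arm_al y * s / D * rowprod y * (br q t X (leg_be (al + X)) * colprod (al + X)).
Proof.
move=> IH; have a0 := al_gt0 hd.
rewrite (big_cat_nat (n := X.+1)) ?ltnS ?leq_addr //=.
rewrite [Z in _ + Z]big_nat_cond [Z in _ + Z]big1 ?addr0 => [|i /andP[/andP[hi _] _]]; last first.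
  by rewrite walkP_eq0 ?mulr0 //=; apply/orP; left; lia.
rewrite -arm_sum big_distrr /=; apply: eq_big_nat => i /andP[i0 hi].
rewrite IH ?i0 // (_ : X + arm_al y - i = arm_al y + (X - i))%N ?exprD; [ring | lia].
Qed.

Lemma leg_walk n x Y (D : K) :
  (forall j, (0 < j <= Y)%N ->
     walkP q t n la (al, be) x (be + Y - j) = walkU x * rowprod (be + Y - j)) ->
  \sum_(1 <= j < (Y + leg_be x).+1)
     (t ^+ (j - 1) * (1 - t) / D) * walkP q t n la (al, be) x (be + Y - j)
  = walkU x / D * (br q t (arm_al (be + Y)) Y * rowprod (be + Y)).
Proof.
move=> IH; have b0 := be_gt0 hd.
rewrite (big_cat_nat (n := Y.+1)) ?ltnS ?leq_addr //=.
rewrite [Z in _ + Z]big_nat_cond [Z in _ + Z]big1 ?addr0 => [|j /andP[/andP[hj _] _]]; last first.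
  by rewrite walkP_eq0 ?mulr0 //=; apply/orP; right; lia.
rewrite -leg_sum big_distrr /=; apply: eq_big_nat => j /andP[j0 hj].
by rewrite IH ?j0 //; ring.
Qed.

Lemma walkP_factor n x y : (al <= x)%N -> (be <= y)%N -> (x + y <= n)%N ->
  walkP q t n la (al, be) x y = walkU x * rowprod y.
Proof.
move=> /subnKC <- /subnKC <-; move: (x - al)%N (y - be)%N => {x y} X Y.
have a0 := al_gt0 hd; have b0 := be_gt0 hd.
elim: n X Y => [|n IH] X Y hn; first by lia.
have arm : (al + X - prow la (be + Y) - 1 = X + arm_al (be + Y))%N.
  have := prow_antimono hla b0 (leq_addr Y be).
  by rewrite /arm_al (prow_be hla hnu hd); lia.
have leg : (be + Y - pcol la (al + X) - 1 = Y + leg_be (al + X))%N.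
  have := pcol_antimono la (leq_addr X al).
  by rewrite /leg_be (pcol_al hla hnu hd); lia.
rewrite /= arm leg; case: ifP => [/andP[]|corner].
  rewrite !addn_eq0 => /andP[/eqP-> _] /andP[/eqP-> _].
  by rewrite !addn0 eqxx walkU_al rowprod_be mulr1.
have hD : 1 - q ^+ (X + arm_al (be + Y)) * t ^+ (Y + leg_be (al + X)) != 0.
  by apply: generic; move: corner; case: (X + _)%N; case: (Y + _)%N.
rewrite arm_walk ?leg_walk => [|j /andP[j0 hj]|i /andP[i0 hi]].
- by rewrite /walkU /br !exprD; field; rewrite -!exprD.
- by rewrite (_ : be + Y - j = be + (Y - j))%N ?IH //; lia.
- by rewrite (_ : al + X - i = al + (X - i))%N ?IH //; lia.
Qed.

End HookWalk.

Theorem theorem6p5 (K : fieldType) (q t : K)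
  (generic : forall i j : nat, (0 < i + j)%N -> 1 - q ^+ i * t ^+ j != 0)
  (la : seq nat) (hla : is_partition la) (c : nat * nat)
  (hx : (prow la 1 < c.1)%N) (hy : (pcol la 1 < c.2)%N)
  (nu : seq nat) (d : nat * nat) (hnu : is_partition nu)
  (hd : adds_cell la nu d) :
  hookP q t la d c = t ^+ (nstat nu - nstat la) * alpha q t la nu.
Proof.
case: d hd => al be hd; case: c hx hy => x y /= hx hy.
rewrite /hookP (walkP_factor generic hla hnu hd) ?(leq_al_of_prow1 hla hnu hd)
  ?(leq_be_of_pcol1 hla hnu hd) //.
rewrite walkU_far // rowprod_far // (nstat_add hla hnu hd) (alphaE _ _ hla hnu hd).
by rewrite -mulrA [X in _ * X]mulrC.
Qed.
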